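(* For every $i\in\{1,2,3,4\}$, every unit ball $b$ and every configuration $\sigma_b$ on $b$ belonging to the class $\mathcal{C}_i$, there exists a periodic configuration $\varphi:V\to\{-1,1\}$ with period not exceeding 2 such that $\varphi_{b'}\in\mathcal{C}_i$ for every unit ball $b'$ and $\varphi_b=\sigma_b$.
   Context: Let $G_2$ be the free product of three cyclic groups of order two with generators $a_1,a_2,a_3$; its elements are the vertices $V$ of the Cayley tree of order 2, with $g,h$ adjacent iff $h=ga_i$ for some $i$, and $d$ the graph distance. A configuration $\varphi:V\to\{-1,1\}$ is periodic with period not exceeding 2 if there is a subgroup $G^*\subset G_2$ of index at most 2 such that $\varphi(gh)=\varphi(h)$ for all $g\in G^*$, $h\in G_2$. A unit ball is $b=\{y: d(x,y)\le1\}$ (center $x$ and its three neighbours, the leaves); $\varphi_b$ denotes the restriction to $b$. A configuration on a unit ball belongs to $\mathcal{C}_1$, $\mathcal{C}_2$, $\mathcal{C}_4$, $\mathcal{C}_3$ according as exactly $3$, $2$, $1$, $0$ of its leaves carry the same value as its center. *)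

From mathcomp Require Import all_boot.
Set Implicit Arguments. Unset Strict Implicit. Unset Printing Implicit Defensive.

(* Elements of G_2 = Z/2 * Z/2 * Z/2 are reduced words over the generators
   a_1,a_2,a_3 (indexed by 'I_3): no two consecutive letters are equal. *)
Definition word := seq 'I_3.

Definition reduced (w : word) : bool := sorted (fun a b : 'I_3 => a != b) w.

(* free reduction, with a stack kept in reversed order *)
Definition push (st : word) (a : 'I_3) : word :=
  match st with
  | b :: st' => if b == a then st' else a :: st
  | [::] => [:: a]
  end.

Definition red (w : word) : word := rev (foldl push [::] w).

Definition gmul (u v : word) : word := red (u ++ v).
Definition ginv (u : word) : word := rev u.

Definition is_subgroup (H : pred word) : Prop :=
  (forall g, H g -> reduced g) /\ H [::] /\
  (forall g h, H g -> H h -> H (gmul g h)) /\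
  (forall g, H g -> H (ginv g)).

(* index at most 2: G_2 is covered by at most two right cosets H and H c *)
Definition index_le2 (H : pred word) : Prop :=
  exists c, reduced c /\ forall g, reduced g -> H g \/ H (gmul g (ginv c)).

(* configurations take values in {-1,1}, encoded as bool (true = 1, false = -1) *)
Definition periodic_le2 (phi : word -> bool) : Prop :=
  exists H : pred word, is_subgroup H /\ index_le2 H /\
    forall g h, H g -> reduced h -> phi (gmul g h) = phi h.

(* class index of a configuration on a unit ball with center value c and
   leaf values l j (leaf j is x a_j): C_1,C_2,C_4,C_3 for 3,2,1,0 agreeing leaves *)
Definition ball_class (c : bool) (l : 'I_3 -> bool) : nat :=
  match #|[pred j | l j == c]| with
  | 3 => 1
  | 2 => 2
  | 1 => 4
  | _ => 3
  end.

(* The letters [j] at which the prescribed leaf value differs from the center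
   value form a set S, and the parity of the number of letters of a word lying
   in S is a homomorphism from G_2 to Z/2.  Its kernel has index at most 2,
   so phi w := b + parity w (mod 2) is periodic with period at most 2, and
   phi (y a_j) differs from phi y exactly when j is in S.  Hence every unit
   ball carries the agreement pattern of the prescribed ball, and the constant
   b is chosen so that phi x = c. *)
From mathcomp Require Import all_boot.

Definition parity (S : pred 'I_3) (w : word) : bool := odd (count S w).

Section Parity.
Variable S : pred 'I_3.

Lemma parity_push st a : parity S (push st a) = parity S st (+) S a.
Proof.
rewrite /parity; case: st => [|b st] /=; first by rewrite addn0 oddb.
case: eqP => [->|_] /=; last by rewrite oddD oddb addbC.
by rewrite oddD oddb addbAC addbb.
Qed.

Lemma parity_foldl_push st w :
  parity S (foldl push st w) = parity S st (+) parity S w.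
Proof.
elim: w st => [|a w IH] st /=; first by rewrite addbF.
by rewrite IH parity_push /parity /= oddD oddb addbA.
Qed.

Lemma parity_red w : parity S (red w) = parity S w.
Proof. by rewrite /red /parity count_rev -/(parity S _) parity_foldl_push. Qed.

Lemma parity_gmul u v : parity S (gmul u v) = parity S u (+) parity S v.
Proof. by rewrite /gmul parity_red /parity count_cat oddD. Qed.

Lemma parity_ginv u : parity S (ginv u) = parity S u.
Proof. by rewrite /parity count_rev. Qed.

Lemma parity_gmul_gen u j : parity S (gmul u [:: j]) = parity S u (+) S j.
Proof. by rewrite parity_gmul /parity /= addn0 oddb. Qed.

End Parity.

Lemma reduced_push st a : reduced st -> reduced (push st a).
Proof.
case: st => [|b st] //=.
case: eqP => [_|/eqP ne] /=; first by case: st => //= ? ? /andP[].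
by move=> ->; rewrite eq_sym ne.
Qed.

Lemma reduced_foldl_push st w : reduced st -> reduced (foldl push st w).
Proof. by elim: w st => [|a w IH] st //= Hst; apply/IH/reduced_push. Qed.

Lemma reduced_ginv w : reduced w -> reduced (ginv w).
Proof. by rewrite /reduced rev_sorted; apply: sub_sorted => a b; rewrite eq_sym. Qed.

Lemma reduced_gmul u v : reduced (gmul u v).
Proof. exact/reduced_ginv/reduced_foldl_push. Qed.

Definition parity_kernel (S : pred 'I_3) : pred word :=
  [pred g | reduced g && ~~ parity S g].

Lemma parity_kernel_subgroup S : is_subgroup (parity_kernel S).
Proof.
split; first by move=> g /andP[].
split=> //; split=> [g h /andP[_ Hg] /andP[_ Hh] | g /andP[Hg Hg']].
  by rewrite /parity_kernel /= reduced_gmul parity_gmul (negbTE Hg) (negbTE Hh).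
by rewrite /parity_kernel /= reduced_ginv // parity_ginv.
Qed.

Lemma parity_kernel_index_le2 S : index_le2 (parity_kernel S).
Proof.
have [j Sj | noS] := pickP S; last first.
  exists [::]; split=> // g Hg; left.
  by rewrite /parity_kernel /= Hg /parity (eq_count noS) count_pred0.
exists [:: j]; split=> // g Hg.
case Eg: (parity S g); [right | left]; last by rewrite /parity_kernel /= Hg Eg.
by rewrite /parity_kernel /= reduced_gmul parity_gmul_gen Sj Eg.
Qed.

Lemma periodic_le2_parity b S : periodic_le2 (fun w => b (+) parity S w).
Proof.
exists (parity_kernel S); split; first exact: parity_kernel_subgroup.
split; first exact: parity_kernel_index_le2.
by move=> g h /andP[_ Hg] _; rewrite parity_gmul (negbTE Hg).
Qed.

Lemma eq_ball_class c l c' l' :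
  (forall j, (l j == c) = (l' j == c')) -> ball_class c l = ball_class c' l'.
Proof. by move=> E; rewrite /ball_class (eq_card E). Qed.

Theorem lemma3p2 (i : nat) (Hi : (1 <= i <= 4)%N) (x : word) (Hx : reduced x)
  (c : bool) (l : 'I_3 -> bool) (Hcl : ball_class c l = i) :
  exists phi : word -> bool,
    periodic_le2 phi /\
    (forall y, reduced y -> ball_class (phi y) (fun j => phi (gmul y [:: j])) = i) /\
    phi x = c /\ (forall j, phi (gmul x [:: j]) = l j).
Proof.
pose S : pred 'I_3 := fun j => l j != c.
pose b := c (+) parity S x.
have step y j : b (+) parity S (gmul y [:: j]) = (b (+) parity S y) (+) (l j != c).
  by rewrite parity_gmul_gen addbA.
exists (fun w => b (+) parity S w); split; first exact: periodic_le2_parity.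
split; last split.
- move=> y _; rewrite -Hcl; apply: eq_ball_class => j /=.
  by rewrite step; case: (b (+) _); case: (l j); case: (c).
- by rewrite /b addbK.
- move=> j; rewrite step /b addbK.
  by case: (l j); case: (c).
Qed.
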